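(* Let $G$ be a countable group, equipped with a proper left-invariant metric, acting by isometries on a metric space $X$ that has straight finite decomposition complexity. If there is a point $x_0\in X$ such that for every $R>0$ the $R$-coarse stabilizer $\{g\in G: d(g.x_0,x_0)\le R\}$ (with the metric restricted from $G$) has straight finite decomposition complexity, then $G$ has straight finite decomposition complexity.
   Context: A metric is proper if bounded sets are finite. For metric families $\mathcal X,\mathcal Y$ and $R>0$, $\mathcal X\xrightarrow{R}\mathcal Y$ means every $Z\in\mathcal X$ can be written $Z=Z^0\cup Z^1$ with each $Z^i$ a union of members of $\mathcal Y$ that are pairwise at distance $>R$. A metric space $X$ (identified with the family $\{X\}$) has straight finite decomposition complexity if for every sequence $R_1\le R_2\le\cdots$ there exist $n$ and metric families $\mathcal Y^1,\dots,\mathcal Y^n$ with $\{X\}\xrightarrow{R_1}\mathcal Y^1$, $\mathcal Y^{i-1}\xrightarrow{R_i}\mathcal Y^i$ ($2\le i\le n$), and $\mathcal Y^n$ uniformly bounded. *)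

From Stdlib Require Import Reals List.
Open Scope R_scope.

Definition is_metric {T : Type} (d : T -> T -> R) : Prop :=
  (forall x y, 0 <= d x y) /\
  (forall x y, d x y = 0 <-> x = y) /\
  (forall x y, d x y = d y x) /\
  (forall x y z, d x z <= d x y + d y z).

Definition bounded_set {T : Type} (d : T -> T -> R) (S : T -> Prop) : Prop :=
  exists B : R, forall a b, S a -> S b -> d a b <= B.

Definition finite_set {T : Type} (S : T -> Prop) : Prop :=
  exists l : list T, forall x, S x -> In x l.

Definition proper_metric {T : Type} (d : T -> T -> R) : Prop :=
  forall S : T -> Prop, bounded_set d S -> finite_set S.

(** Metric families: since every family occurring in the definition of
    straight FDC of a (sub)space consists of subspaces of it, a metric
    family is modelled as a collection of subsets of the ambient space,
    each carrying the restricted metric. *)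
Definition family (T : Type) := (T -> Prop) -> Prop.

(** Distance between two subsets is > R (d(A,B) = inf, so inf > R; empty
    sets are at distance +oo). *)
Definition set_dist_gt {T : Type} (d : T -> T -> R) (R0 : R) (A B : T -> Prop) : Prop :=
  exists r : R, R0 < r /\ forall a b, A a -> B b -> r <= d a b.

Definition R_disjoint_union_of {T : Type} (d : T -> T -> R) (R0 : R)
    (Y : family T) (Z : T -> Prop) : Prop :=
  exists W : family T,
    (forall V, W V -> Y V) /\
    (forall x, Z x <-> exists V, W V /\ V x) /\
    (forall V1 V2, W V1 -> W V2 -> V1 <> V2 -> set_dist_gt d R0 V1 V2).

Definition decomposes {T : Type} (d : T -> T -> R) (X : family T) (R0 : R)
    (Y : family T) : Prop :=
  forall Z, X Z ->
    exists Z0 Z1 : T -> Prop,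
      (forall x, Z x <-> Z0 x \/ Z1 x) /\
      R_disjoint_union_of d R0 Y Z0 /\ R_disjoint_union_of d R0 Y Z1.

Definition uniformly_bounded {T : Type} (d : T -> T -> R) (Y : family T) : Prop :=
  exists B : R, forall V, Y V -> forall a b, V a -> V b -> d a b <= B.

Definition singleton_family {T : Type} (S : T -> Prop) : family T :=
  fun V => V = S.

(** Straight FDC of the subspace A (with restricted metric).
    The sequence R_1 <= R_2 <= ... is Rs 0 <= Rs 1 <= ..., all > 0;
    the families Y^1..Y^n are Ys 0 .. Ys n' (n = n'+1). *)
Definition sFDC_sub {T : Type} (d : T -> T -> R) (A : T -> Prop) : Prop :=
  forall Rs : nat -> R,
    (forall i, 0 < Rs i) -> (forall i, Rs i <= Rs (S i)) ->
    exists (n' : nat) (Ys : nat -> family T),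
      decomposes d (singleton_family A) (Rs 0%nat) (Ys 0%nat) /\
      (forall i, (i < n')%nat -> decomposes d (Ys i) (Rs (S i)) (Ys (S i))) /\
      uniformly_bounded d (Ys n').

Definition sFDC {T : Type} (d : T -> T -> R) : Prop :=
  sFDC_sub d (fun _ => True).

Record group_str (G : Type) := GroupStr {
  gmul : G -> G -> G;
  ginv : G -> G;
  gone : G;
  gmulA : forall a b c, gmul a (gmul b c) = gmul (gmul a b) c;
  gmul1 : forall a, gmul gone a = a;
  gmulV : forall a, gmul (ginv a) a = gone
}.
Arguments gmul {G} g _ _.
Arguments ginv {G} g _.
Arguments gone {G} g.

Definition countable_type (T : Type) : Prop :=
  exists f : T -> nat, forall x y, f x = f y -> x = y.

Definition left_invariant {G : Type} (g : group_str G) (d : G -> G -> R) : Prop :=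
  forall a b c, d (gmul g a b) (gmul g a c) = d b c.

Definition isometric_action {G X : Type} (g : group_str G) (dX : X -> X -> R)
    (act : G -> X -> X) : Prop :=
  (forall x, act (gone g) x = x) /\
  (forall a b x, act (gmul g a b) x = act a (act b x)) /\
  (forall a x y, dX (act a x) (act a y) = dX x y).

Definition coarse_stabilizer {G X : Type} (dX : X -> X -> R) (act : G -> X -> X)
    (x0 : X) (R0 : R) : G -> Prop :=
  fun a => dX (act a x0) x0 <= R0.

(** The orbit map [a |-> a.x0] is uniformly expansive ([G] is proper and the
    action is isometric), so decompositions of [X] pull back to [G] at the
    same scales, ending in the preimages of a uniformly bounded family.  Each
    such preimage [U] is, after left translation by [a0^-1] for any [a0] in
    [U], contained in a single coarse stabilizer; decomposing that stabilizer
    and translating back continues the chain in [G] until it becomes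
    uniformly bounded. *)
From Pilot Require Import Defs.
From Stdlib Require Import Reals List Lra Lia Arith Classical IndefiniteDescription.
Open Scope R_scope.

Definition decomposition_chain {T : Type} (d : T -> T -> R) (Rs : nat -> R)
    (Ys : nat -> Defs.family T) (n : nat) : Prop :=
  forall i, (i < n)%nat -> decomposes d (Ys i) (Rs (S i)) (Ys (S i)).

Definition concat_families {T : Type} (Ys Zs : nat -> Defs.family T) (n : nat) :
    nat -> Defs.family T :=
  fun i => if Nat.leb i n then Ys i else Zs (i - S n)%nat.

Definition preimage_family {G X : Type} (f : G -> X) (F : Defs.family X) :
    Defs.family G :=
  fun U => exists V, F V /\ U = (fun a => V (f a)).

Definition translate_family {G : Type} (g : group_str G) (P F : Defs.family G) :
    Defs.family G :=
  fun U' => exists U a0 Z, P U /\ U a0 /\ F Z /\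
    U' = (fun a => U a /\ Z (gmul g (ginv g a0) a)).

Section Decompositions.

Variables (T : Type) (d : T -> T -> R).

Lemma decomposes_subfamily (F F' Y : Defs.family T) (R0 : R) :
  (forall Z, F Z -> F' Z) -> decomposes d F' R0 Y -> decomposes d F R0 Y.
Proof. intros HFF' Hdec Z HZ. exact (Hdec Z (HFF' Z HZ)). Qed.

Lemma R_disjoint_union_of_empty (R0 : R) (Y : Defs.family T) (U : T -> Prop) :
  ~ (exists a, U a) -> R_disjoint_union_of d R0 Y U.
Proof.
  intros Hempty. exists (fun _ => False). split; [intros V []|split].
  - intro x; split; [intro Hx; exfalso; eauto | intros [V [[] _]]].
  - intros V1 V2 [].
Qed.

Lemma decomposition_chain_concat (Rs : nat -> R) (Ys Zs : nat -> Defs.family T)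
    (n m : nat) :
  decomposition_chain d Rs Ys n ->
  decomposes d (Ys n) (Rs (S n)) (Zs 0%nat) ->
  decomposition_chain d (fun j => Rs (j + S n)%nat) Zs m ->
  decomposition_chain d Rs (concat_families Ys Zs n) (S n + m).
Proof.
  intros HYs Hlink HZs i Hi; unfold concat_families.
  destruct (lt_eq_lt_dec i n) as [[Hlt | ->] | Hgt].
  - rewrite (proj2 (Nat.leb_le i n)), (proj2 (Nat.leb_le (S i) n)) by lia.
    exact (HYs i Hlt).
  - rewrite Nat.leb_refl, (proj2 (Nat.leb_gt (S n) n)), Nat.sub_diag by lia.
    exact Hlink.
  - rewrite (proj2 (Nat.leb_gt i n)), (proj2 (Nat.leb_gt (S i) n)) by lia.
    replace (S i - S n)%nat with (S (i - S n)) by lia.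
    replace (Rs (S i)) with (Rs (S (i - S n) + S n)%nat) by (f_equal; lia).
    apply HZs; lia.
Qed.

Lemma concat_families_last (Ys Zs : nat -> Defs.family T) (n m : nat) :
  concat_families Ys Zs n (S n + m) = Zs m.
Proof.
  unfold concat_families. rewrite (proj2 (Nat.leb_gt (S n + m) n)) by lia.
  f_equal; lia.
Qed.

End Decompositions.

Lemma exists_increasing_majorant (f : nat -> R) :
  exists s : nat -> R,
    (forall k, 0 < s k) /\ (forall k, s k <= s (S k)) /\ (forall k, f k <= s k).
Proof.
  exists (fun k => sum_f_R0 (fun i => Rabs (f i)) k + 1).
  assert (Hsum : forall k, 0 <= sum_f_R0 (fun i => Rabs (f i)) k)
    by (intro k; apply cond_pos_sum; intro; apply Rabs_pos).
  split; [|split].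
  - intro k. specialize (Hsum k). lra.
  - intro k. simpl. pose proof (Rabs_pos (f (S k))). lra.
  - intros [|k]; simpl.
    + pose proof (Rle_abs (f 0%nat)). lra.
    + pose proof (Rle_abs (f (S k))). specialize (Hsum k). lra.
Qed.

Section Pullback.

Variables (G X : Type) (dG : G -> G -> R) (dX : X -> X -> R) (f : G -> X).
Variables (Rg Rx : R).
Hypothesis f_expansive : forall a b, dG a b <= Rg + 1 -> dX (f a) (f b) <= Rx.

Lemma R_disjoint_union_of_preimage (Y : Defs.family X) (V0 : X -> Prop) :
  R_disjoint_union_of dX Rx Y V0 ->
  R_disjoint_union_of dG Rg (preimage_family f Y) (fun a => V0 (f a)).
Proof.
  intros [W [HWY [HWcover HWsep]]].
  exists (preimage_family f W). split; [|split].
  - intros U [V [HV ->]]. exists V; split; auto.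
  - intro a. rewrite HWcover. split.
    + intros [V [HV HVa]]. exists (fun b => V (f b)). split; [exists V|]; auto.
    + intros [U [[V [HV ->]] HVa]]. exists V; auto.
  - intros U1 U2 [V1 [HV1 ->]] [V2 [HV2 ->]] Hne.
    assert (HV12 : V1 <> V2) by (intros ->; apply Hne; reflexivity).
    destruct (HWsep V1 V2 HV1 HV2 HV12) as [r [Hr Hsep]].
    (* points of [G] at distance [<= Rg + 1] map to points at distance [<= Rx < r] *)
    exists (Rg + 1). split; [lra|]. intros a b Ha Hb.
    destruct (Rle_lt_dec (dG a b) (Rg + 1)) as [Hle|Hlt]; [|lra].
    pose proof (f_expansive a b Hle). pose proof (Hsep _ _ Ha Hb). lra.
Qed.

Lemma decomposes_preimage (F Y : Defs.family X) :
  decomposes dX F Rx Y -> decomposes dG (preimage_family f F) Rg (preimage_family f Y).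
Proof.
  intros Hdec Z [V [HV ->]].
  destruct (Hdec V HV) as [V0 [V1 [Hcover [H0 H1]]]].
  exists (fun a => V0 (f a)), (fun a => V1 (f a)).
  split; [intro a; apply Hcover|].
  split; apply R_disjoint_union_of_preimage; assumption.
Qed.

Lemma decomposes_preimage_singleton (A : X -> Prop) (Y : Defs.family X) :
  decomposes dX (singleton_family A) Rx Y ->
  decomposes dG (singleton_family (fun a => A (f a))) Rg (preimage_family f Y).
Proof.
  intros Hdec.
  apply (decomposes_subfamily _ _ _ (preimage_family f (singleton_family A))).
  - intros Z ->. exists A. split; reflexivity.
  - exact (decomposes_preimage _ _ Hdec).
Qed.

End Pullback.

Section Translation.

Variables (G : Type) (g : group_str G) (dG : G -> G -> R).
Hypothesis dG_invariant : left_invariant g dG.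

Lemma R_disjoint_union_of_translate (P F : Defs.family G) (R0 : R)
    (U : G -> Prop) (a0 : G) (S0 : G -> Prop) :
  P U -> U a0 -> R_disjoint_union_of dG R0 F S0 ->
  R_disjoint_union_of dG R0 (translate_family g P F)
    (fun a => U a /\ S0 (gmul g (ginv g a0) a)).
Proof.
  intros HP Ha0 [W [HWF [HWcover HWsep]]].
  exists (fun U' => exists Z, W Z /\ U' = (fun a => U a /\ Z (gmul g (ginv g a0) a))).
  split; [|split].
  - intros U' [Z [HZ ->]]. exists U, a0, Z. auto.
  - intro a. rewrite HWcover. split.
    + intros [HUa [Z [HZ HZa]]].
      exists (fun b => U b /\ Z (gmul g (ginv g a0) b)). split; [exists Z|]; auto.
    + intros [U' [[Z [HZ ->]] [HUa HZa]]]. split; [|exists Z]; auto.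
  - intros U1 U2 [Z1 [HZ1 ->]] [Z2 [HZ2 ->]] Hne.
    assert (HZ12 : Z1 <> Z2) by (intros ->; apply Hne; reflexivity).
    destruct (HWsep _ _ HZ1 HZ2 HZ12) as [r [Hr Hsep]]. exists r; split; auto.
    intros a b [_ Ha] [_ Hb]. rewrite <- (dG_invariant (ginv g a0) a b). auto.
Qed.

Lemma decomposes_translate_family (P F F' : Defs.family G) (R0 : R) :
  decomposes dG F R0 F' ->
  decomposes dG (translate_family g P F) R0 (translate_family g P F').
Proof.
  intros Hdec Z' [U [a0 [Z [HP [Ha0 [HZ ->]]]]]].
  destruct (Hdec Z HZ) as [S0 [S1 [Hcover [H0 H1]]]].
  exists (fun a => U a /\ S0 (gmul g (ginv g a0) a)),
         (fun a => U a /\ S1 (gmul g (ginv g a0) a)).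
  split; [intro a; rewrite Hcover; tauto|].
  split; apply R_disjoint_union_of_translate; assumption.
Qed.

Lemma decomposes_into_translates (P F : Defs.family G) (St : G -> Prop) (R0 : R) :
  (forall U a0 a, P U -> U a0 -> U a -> St (gmul g (ginv g a0) a)) ->
  decomposes dG (singleton_family St) R0 F ->
  decomposes dG P R0 (translate_family g P F).
Proof.
  intros HPSt Hdec U HP.
  destruct (classic (exists a0, U a0)) as [[a0 Ha0] | Hempty].
  - destruct (Hdec St eq_refl) as [S0 [S1 [Hcover [H0 H1]]]].
    exists (fun a => U a /\ S0 (gmul g (ginv g a0) a)),
           (fun a => U a /\ S1 (gmul g (ginv g a0) a)).
    split.
    + intro a. split.
      * intro HUa. pose proof (HPSt U a0 a HP Ha0 HUa) as HSt.
        apply Hcover in HSt. tauto.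
      * tauto.
    + split; apply R_disjoint_union_of_translate; assumption.
  - exists U, U. split; [intro; tauto|].
    split; apply R_disjoint_union_of_empty; assumption.
Qed.

Lemma uniformly_bounded_translate_family (P F : Defs.family G) :
  uniformly_bounded dG F -> uniformly_bounded dG (translate_family g P F).
Proof.
  intros [B HB]. exists B.
  intros U' [U [a0 [Z [_ [_ [HZ ->]]]]]] a b [_ Ha] [_ Hb].
  rewrite <- (dG_invariant (ginv g a0)). eauto.
Qed.

End Translation.

Lemma finite_set_bounded_image {T : Type} (S : T -> Prop) (h : T -> R) :
  finite_set S -> exists M, forall x, S x -> h x <= M.
Proof.
  assert (Hlist : forall l : list T, exists M, forall x, In x l -> h x <= M).
  { induction l as [|y l [M HM]].
    - exists 0. intros x [].
    - exists (Rmax (h y) M). intros x [<- | Hx].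
      + apply Rmax_l.
      + eapply Rle_trans; [apply HM, Hx | apply Rmax_r]. }
  intros [l Hl]. destruct (Hlist l) as [M HM]. exists M. auto.
Qed.

Section Orbit.

Variables (G X : Type) (g : group_str G) (dG : G -> G -> R) (dX : X -> X -> R).
Variables (act : G -> X -> X) (x0 : X).
Hypothesis act_isometric : isometric_action g dX act.

Lemma orbit_dist_translate (a b : G) :
  dX (act (gmul g (ginv g b) a) x0) x0 = dX (act a x0) (act b x0).
Proof.
  destruct act_isometric as [Hone [Hmul Hiso]].
  rewrite <- (Hiso (ginv g b) (act a x0) (act b x0)), <- !Hmul, gmulV, Hone.
  reflexivity.
Qed.

Lemma translate_in_coarse_stabilizer (V : X -> Prop) (B : R) (a0 a : G) :
  (forall y z, V y -> V z -> dX y z <= B) -> V (act a0 x0) -> V (act a x0) ->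
  coarse_stabilizer dX act x0 B (gmul g (ginv g a0) a).
Proof.
  intros HVB Ha0 Ha. unfold coarse_stabilizer. rewrite orbit_dist_translate. auto.
Qed.

Lemma orbit_map_bornologous :
  is_metric dG -> proper_metric dG -> left_invariant g dG ->
  forall S, exists L, forall a b, dG a b <= S -> dX (act a x0) (act b x0) <= L.
Proof.
  intros [_ [_ [Hsym Htri]]] Hproper Hinv S.
  assert (Hball : finite_set (fun c => dG c (gone g) <= S)).
  { apply Hproper. exists (S + S). intros a b Ha Hb.
    pose proof (Htri a (gone g) b). rewrite (Hsym (gone g) b) in *. lra. }
  destruct (finite_set_bounded_image _ (fun c => dX (act c x0) x0) Hball) as [L HL].
  exists L. intros a b Hab. rewrite <- orbit_dist_translate. apply HL.
  rewrite <- (gmulV _ g b), Hinv. exact Hab.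
Qed.

End Orbit.

Theorem proposition5p4 (G : Type) (g : group_str G) (dG : G -> G -> R)
  (X : Type) (dX : X -> X -> R) (act : G -> X -> X) :
  countable_type G ->
  is_metric dG -> proper_metric dG -> left_invariant g dG ->
  is_metric dX -> isometric_action g dX act ->
  sFDC dX ->
  (exists x0 : X, forall R0 : R, 0 < R0 ->
      sFDC_sub dG (coarse_stabilizer dX act x0 R0)) ->
  sFDC dG.
Proof.
  intros _ HmG Hproper Hinv _ Hact HX [x0 Hstab] Rs HRpos HRmon.
  set (p := fun a => act a x0).
  destruct (functional_choice _ (orbit_map_bornologous G X g dG dX act x0 Hact
    HmG Hproper Hinv)) as [L HL].
  destruct (exists_increasing_majorant (fun k => L (Rs k + 1)))
    as [Sx [HSpos [HSmon HSmaj]]].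
  assert (Hexp : forall k a b, dG a b <= Rs k + 1 -> dX (p a) (p b) <= Sx k)
    by (intros; eapply Rle_trans; [apply HL; eassumption | apply HSmaj]).
  destruct (HX Sx HSpos HSmon) as [n [Ys [HY0 [HYchain [B HB]]]]].
  set (P := preimage_family p (Ys n)).
  assert (HPstab : forall U a0 a, P U -> U a0 -> U a ->
            coarse_stabilizer dX act x0 (Rmax 1 B) (gmul g (ginv g a0) a)).
  { intros U a0 a [V [HV ->]] Ha0 Ha.
    apply (translate_in_coarse_stabilizer G X g dX act x0 Hact V); [|assumption..].
    intros y z Hy Hz. eapply Rle_trans; [exact (HB V HV y z Hy Hz) | apply Rmax_r]. }
  destruct (Hstab (Rmax 1 B) (Rlt_le_trans _ _ _ Rlt_0_1 (Rmax_l 1 B))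
    (fun j => Rs (j + S n)%nat)) as [m [Zs [HZ0 [HZchain HZbd]]]];
    [intro; apply HRpos | intro; apply HRmon |].
  exists (S n + m)%nat,
    (concat_families (fun i => preimage_family p (Ys i))
                     (fun j => translate_family g P (Zs j)) n).
  split; [|split].
  - exact (decomposes_preimage_singleton G X dG dX p _ _ (Hexp 0%nat) _ _ HY0).
  - apply decomposition_chain_concat.
    + intros i Hi.
      exact (decomposes_preimage G X dG dX p _ _ (Hexp (S i)) _ _ (HYchain i Hi)).
    + exact (decomposes_into_translates G g dG Hinv P (Zs 0%nat) _ _ HPstab HZ0).
    + intros j Hj.
      exact (decomposes_translate_family G g dG Hinv P _ _ _ (HZchain j Hj)).
  - rewrite concat_families_last.
    exact (uniformly_bounded_translate_family G g dG Hinv P (Zs m) HZbd).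
Qed.
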